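(* Let $f(y\mid\vec x)$ be a conditional density of $Y\in\mathbb R$ given $\vec X=\vec x\in\mathcal X$, continuous as a function of $y$ for every $\vec x$, and suppose $\widehat f=f$. For $\vec x\in\mathcal X$, $t\ge0$ let $g_{\vec x}(t)=\int_{\{y:f(y\mid\vec x)\ge t\}}f(y\mid\vec x)\,dy$, and define the profile distance $d_g(\vec x_a,\vec x_b)=\left(\int_0^\infty (g_{\vec x_a}(t)-g_{\vec x_b}(t))^2\,dt\right)^{1/2}$. For $\vec x\in\mathcal X$ and $\alpha\in(0,1)$ let $t^*(\vec x,\alpha)$ be the cutoff of the oracle band for $f(\cdot\mid\vec x)$ with coverage $1-\alpha$, i.e. the value with $\{y: f(y\mid\vec x)\ge t^*(\vec x,\alpha)\}$ the smallest region with probability $1-\alpha$ (so $g_{\vec x}(t^*(\vec x,\alpha))=1-\alpha$). Let $\sim$ be the equivalence relation $\vec x_a\sim\vec x_b\iff d_g(\vec x_a,\vec x_b)=0$. Then: (i) if $\vec x_a\sim\vec x_b$, then $t^*(\vec x_a,\alpha)=t^*(\vec x_b,\alpha)$ for every $\alpha\in(0,1)$; (ii) if $\sim'$ is any equivalence relation on $\mathcal X$ such that $\vec x_a\sim'\vec x_b$ implies $t^*(\vec x_a,\alpha)=t^*(\vec x_b,\alpha)$ for every $\alpha\in(0,1)$, then $\vec x_a\sim'\vec x_b\Rightarrow\vec x_a\sim\vec x_b$. *)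

From HB Require Import structures.
From mathcomp Require Import all_boot all_order all_algebra.
From mathcomp Require Import all_classical all_reals all_analysis.
Set Implicit Arguments. Unset Strict Implicit. Unset Printing Implicit Defensive.
Import Order.TTheory GRing.Theory Num.Theory.
Import numFieldNormedType.Exports.
Local Open Scope classical_set_scope.
Local Open Scope ring_scope.

(* f : X -> R -> R is a family of conditional densities f(y | x). *)

Definition gprof (R : realType) (X : Type) (f : X -> R -> R) (x : X) (t : R) : R :=
  Rintegral (@lebesgue_measure R) [set y | t <= f x y] (f x).

Definition dprof (R : realType) (X : Type) (f : X -> R -> R) (xa xb : X) : \bar R :=
  sqrte (\int[@lebesgue_measure R]_(t in `[0, +oo[%classic)
           ((gprof f xa t - gprof f xb t) ^+ 2)%:E).

(* cutoff of the oracle HPD band of coverage 1 - alpha: the largest level t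
   such that {y : f(y|x) >= t} still has probability >= 1 - alpha *)
Definition tstar (R : realType) (X : Type) (f : X -> R -> R) (x : X) (alpha : R) : R :=
  sup [set t | 0 <= t /\ 1 - alpha <= gprof f x t].

Definition prof_equiv (R : realType) (X : Type) (f : X -> R -> R) (xa xb : X) : Prop :=
  dprof f xa xb = 0%E.

From HB Require Import structures.
From mathcomp Require Import all_boot all_order all_algebra.
From mathcomp Require Import all_classical all_reals all_analysis.
From mathcomp Require Import measurable_realfun lra.
Set Implicit Arguments. Unset Strict Implicit. Unset Printing Implicit Defensive.
Import Order.TTheory GRing.Theory Num.Theory.
Import numFieldNormedType.Exports.
Local Open Scope classical_set_scope.
Local Open Scope ring_scope.

(* The profile g(t) = \int_{h >= t} h of a probability density h is
   nonincreasing, equal to 1 at 0, nonnegative, left-continuous and vanishes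
   at infinity; the last two facts are continuity from below of the measure
   with density h along {h < t - 1/(n+1)} and {h < n}.  For such a g, a level
   t >= 0 is below the cutoff of coverage 1 - alpha exactly when
   g(t) >= 1 - alpha, so the cutoffs determine g on [0, +oo) and conversely.
   Also d_g(x_a, x_b) = 0 iff the two profiles agree on [0, +oo): a strict
   inequality g_a(t) < g_b(t) at t > 0 persists, by monotonicity and left
   continuity, on an interval [s, t] and makes the integral positive.  So both
   relations of the theorem say "equal profiles on [0, +oo)".  Continuity of
   f(. | x) is only used for its measurability. *)

Lemma sqrte_eq0 (R : realType) (x : \bar R) :
  (0 <= x)%E -> sqrte x = 0%E <-> x = 0%E.
Proof.
move=> x0; split => [sx0|->]; last exact: sqrte0.
by rewrite -(sqr_sqrte x0) sx0 expe2 mule0.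
Qed.

Lemma ge0_integral_bigcup_le d (T : measurableType d) (R : realType)
    (mu : {measure set T -> \bar R}) (F : (set T)^nat) (f : T -> \bar R)
    (a : \bar R) :
  nondecreasing_seq F -> (forall n, measurable (F n)) ->
  measurable_fun setT f -> (forall x, 0 <= f x)%E ->
  (forall n, \int[mu]_(x in F n) f x <= a)%E ->
  (\int[mu]_(x in \bigcup_n F n) f x <= a)%E.
Proof.
move=> ndF mF mf f0 Fa.
have cvF := ge0_nondecreasing_set_cvg_integral (mu := mu) ndF mF
  (fun n => measurable_funTS mf) (fun n x _ => f0 x).
by rewrite -(cvg_lim _ cvF)//; apply: lime_le; [exact: cvgP cvF|exact: nearW].
Qed.

Record level_profile (R : realType) (g : R -> R) : Prop := LevelProfile {
  level_profile_nonincr : nonincreasing_fun g;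
  level_profile0 : g 0 = 1;
  level_profile_ge0 : forall t, 0 <= g t;
  level_profile_left : forall t c, g t < c -> exists2 s, s < t & g s < c;
  level_profile_vanish : forall c, 0 < c -> exists t, g t < c }.

Section level_mass.
Context d (T : measurableType d) (R : realType).
Variable mu : {measure set T -> \bar R}.
Variable h : T -> R.
Hypotheses (h_ge0 : forall y, 0 <= h y) (mh : measurable_fun setT h)
  (h_int : (\int[mu]_y (h y)%:E = 1)%E).

Local Notation mass A := (integral mu A (fun y => (h y)%:E)).

Let mhE : measurable_fun setT (fun y => (h y)%:E).
Proof. exact/measurable_EFinP. Qed.

Let mh_ge t : measurable [set y | t <= h y].
Proof.
have := mh measurableT (measurable_itv `[t, +oo[); rewrite setTI.
by congr measurable; apply/seteqP; split => y /=; rewrite in_itv/= andbT.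
Qed.

Let mh_lt t : measurable [set y | h y < t].
Proof.
have := mh measurableT (measurable_itv `]-oo, t[); rewrite setTI.
by congr measurable; apply/seteqP; split => y /=; rewrite in_itv.
Qed.

Let mass_le1 A : measurable A -> (mass A <= 1)%E.
Proof.
move=> mA; rewrite -h_int.
by apply: ge0_subset_integral => // y _; rewrite lee_fin.
Qed.

Let mass_fin_num A : measurable A -> mass A \is a fin_num.
Proof.
move=> mA; rewrite ge0_fin_numE;
  first exact: le_lt_trans (mass_le1 mA) (ltry _).
by apply: integral_ge0 => y _; rewrite lee_fin.
Qed.

Let below t := fine (mass [set y | h y < t]).

Let belowE t : (below t)%:E = mass [set y | h y < t].
Proof. exact/fineK/mass_fin_num. Qed.

Let level_massE t : Rintegral mu [set y | t <= h y] h = 1 - below t.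
Proof.
have split_mass :
    (mass [set y | (t <= h y)%R] + mass [set y | (h y < t)%R] = 1)%E.
  rewrite -ge0_integral_setU//; last 3 first.
  - exact: measurable_funTS mhE.
  - by move=> y _; rewrite lee_fin.
  - rewrite disj_set2E; apply/eqP/seteqP; split=> y //= [].
    by move=> /le_lt_trans/[apply]; rewrite ltxx.
  rewrite -h_int; congr integral; apply/seteqP; split => y //= _.
  by case: (leP t (h y)); [left|right].
have := split_mass; rewrite -belowE -(fineK (mass_fin_num (mh_ge t))) -EFinD.
by move=> [<-]; rewrite addrK.
Qed.

Let below_nondecr : nondecreasing_fun below.
Proof.
move=> s t st; rewrite -lee_fin !belowE; apply: ge0_subset_integral => //.
- exact: measurable_funTS mhE.
- by move=> y _; rewrite lee_fin.
- by move=> y /= /lt_le_trans; apply.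
Qed.

Let lt_below_of_bigcup (u : nat -> R) a : nondecreasing_seq u ->
  (a%:E < mass (\bigcup_n [set y | (h y < u n)%R]))%E ->
  exists n, a < below (u n).
Proof.
move=> ndu; apply: contraPP => /forallNP below_le; apply/negP; rewrite -leNgt.
apply: (ge0_integral_bigcup_le _ _ mhE) => [m n mn|n|y|n].
- by rewrite subsetEset => y /= /lt_le_trans; apply; exact: ndu.
- exact: mh_lt.
- by rewrite lee_fin.
- by rewrite -belowE lee_fin leNgt; apply/negP/below_le.
Qed.

Let below_le0 t : t <= 0 -> below t = 0.
Proof.
move=> t0; apply/EFin_inj; rewrite belowE.
have -> : [set y | h y < t] = set0.
  by apply/seteqP; split => y //= /lt_le_trans /(_ t0); rewrite ltNge h_ge0.
exact: integral_set0.
Qed.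

Let below_le1 t : below t <= 1.
Proof. by rewrite -lee_fin belowE; exact: mass_le1. Qed.

Lemma level_profile_mass :
  level_profile (fun t => Rintegral mu [set y | t <= h y] h).
Proof.
split => [s t st|||t c|c c0]; rewrite ?level_massE.
- by rewrite lerD2l lerN2; exact: below_nondecr.
- by rewrite below_le0 ?subr0.
- by move=> t; rewrite level_massE subr_ge0 below_le1.
- move=> gtc; pose u n := t - n.+1%:R^-1.
  have ndu : nondecreasing_seq u.
    by move=> m n mn; rewrite lerD2l lerN2 lef_pV2 ?posrE// ler_nat ltnS.
  have Ut : \bigcup_n [set y | h y < u n] = [set y | h y < t].
    apply/seteqP; split => y /=.
      by move=> [n _ /lt_le_trans]; apply; rewrite lerBlDr lerDl.
    by move=> /ltr_add_invr [n hyn]; exists n => //=; rewrite /u ltrBrDr.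
  have [|m ltm] := lt_below_of_bigcup (a := 1 - c) ndu.
    by rewrite Ut -belowE lte_fin; lra.
  exists (u m); first by rewrite ltrBlDr ltrDl.
  by rewrite level_massE; lra.
- have ndu : nondecreasing_seq (fun n : nat => n%:R : R).
    by move=> m n mn; rewrite ler_nat.
  have [|n ltn] := lt_below_of_bigcup (a := 1 - c) ndu.
    have -> : \bigcup_n [set y | h y < n%:R] = setT.
      apply/seteqP; split => // y _.
      by exists (Num.truncn (h y)).+1 => //; exact: truncnS_gt.
    by rewrite h_int lte_fin; lra.
  by exists n%:R; rewrite level_massE; lra.
Qed.

End level_mass.

Section level_profile_theory.
Variable R : realType.
Implicit Types (g : R -> R) (alpha t : R).
Local Notation mu := (@lebesgue_measure R).

Definition cutoff g alpha := sup [set t | 0 <= t /\ 1 - alpha <= g t].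

Lemma le_cutoffP g alpha t : level_profile g -> 0 < alpha < 1 -> 0 <= t ->
  (1 - alpha <= g t) <-> (t <= cutoff g alpha).
Proof.
move=> [g_ni g0 _ g_left g_vanish] /andP[a0 a1] t0.
set S := [set u | 0 <= u /\ 1 - alpha <= g u].
have S0 : S 0 by split; rewrite // g0 lerBlDr lerDl ltW.
have ubS s : g s < 1 - alpha -> ubound S s.
  move=> gs u [_ gu]; rewrite leNgt; apply/negP => /ltW /g_ni gsu.
  by have := le_lt_trans gu (le_lt_trans gsu gs); rewrite ltxx.
split => [gt|tS].
  have [M gM] : exists M, g M < 1 - alpha by apply: g_vanish; rewrite subr_gt0.
  by apply: ub_le_sup; [exists M; exact: ubS|split].
rewrite leNgt; apply/negP => /g_left[s st /ubS/(ge_sup (ex_intro _ 0 S0))].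
by move=> /(le_trans tS); rewrite leNgt st.
Qed.

Lemma level_profile_lt_cutoff g1 g2 t : level_profile g1 -> level_profile g2 ->
  0 <= t -> g1 t < g2 t ->
  exists2 alpha, 0 < alpha < 1 & cutoff g1 alpha < cutoff g2 alpha.
Proof.
move=> p1 p2 t0 lt12.
have g2t_le1 : g2 t <= 1.
  by rewrite -(level_profile0 p2); exact: level_profile_nonincr.
have g1t_ge0 := level_profile_ge0 p1 t.
pose alpha := 1 - (g1 t + g2 t) / 2.
have a01 : 0 < alpha < 1 by apply/andP; split; rewrite /alpha; lra.
exists alpha => //; apply: (@lt_le_trans _ _ t).
  by rewrite ltNge; apply/negP => /(le_cutoffP p1 a01 t0); rewrite /alpha; lra.
by apply/(le_cutoffP p2 a01 t0); rewrite /alpha; lra.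
Qed.

Lemma cutoff_eqP g1 g2 : level_profile g1 -> level_profile g2 ->
  (forall alpha, 0 < alpha < 1 -> cutoff g1 alpha = cutoff g2 alpha) <->
  (forall t, 0 <= t -> g1 t = g2 t).
Proof.
move=> p1 p2; split => [eq_cut t t0|eq_g alpha _]; last first.
  congr sup; apply/seteqP.
  by split => u [u0 gu]; split; rewrite // ?eq_g// -eq_g.
case: (ltgtP (g1 t) (g2 t)) => // [lt12|lt21].
- have [alpha a01] := level_profile_lt_cutoff p1 p2 t0 lt12.
  by rewrite eq_cut// ltxx.
- have [alpha a01] := level_profile_lt_cutoff p2 p1 t0 lt21.
  by rewrite eq_cut// ltxx.
Qed.

Let measurable_sq_dist g1 g2 (D : set R) :
  level_profile g1 -> level_profile g2 -> measurable D ->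
  measurable_fun D (fun t => ((g1 t - g2 t) ^+ 2)%:E).
Proof.
move=> p1 p2 mD; apply/measurable_EFinP/measurable_funX/measurable_funB;
  exact: nonincreasing_measurable (level_profile_nonincr _).
Qed.

Lemma sq_dist_integral_gt0 g1 g2 t : level_profile g1 -> level_profile g2 ->
  0 < t -> g1 t != g2 t ->
  (0 < \int[mu]_(u in `[0%R, +oo[%classic) ((g1 u - g2 u) ^+ 2)%:E)%E.
Proof.
wlog lt12 : g1 g2 / g1 t < g2 t.
  move=> wlog_lt p1 p2 t0; case: (ltgtP (g1 t) (g2 t)) => // lt21 _.
    by apply: wlog_lt; rewrite ?lt_eqF.
  apply: lt_le_trans (wlog_lt g2 g1 lt21 p2 p1 t0 _) _; first by rewrite lt_eqF.
  rewrite le_eqVlt; apply/orP; left.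
  by apply/eqP/eq_integral => u _; rewrite -sqrrN opprB.
move=> p1 p2 t0 _; pose e := (g2 t - g1 t) / 2.
have ee : e + e = g2 t - g1 t by rewrite /e; lra.
have e_gt0 : 0 < e by lra.
have [s st g1s] : exists2 s, s < t & g1 s < g1 t + e.
  by apply: level_profile_left p1 _ _ _; rewrite ltrDl.
pose s' := Num.max 0 s.
have s't : s' < t by rewrite gt_max t0 st.
have g1s' : g1 s' < g1 t + e.
  apply: le_lt_trans g1s; apply: level_profile_nonincr p1 _ _ _.
  by rewrite le_max lexx orbT.
have sq_ge u : u \in `[s', t] -> e ^+ 2 <= (g1 u - g2 u) ^+ 2.
  rewrite in_itv/= => /andP[su ut].
  have := level_profile_nonincr p1 su; have := level_profile_nonincr p2 ut.
  move=> h2 h1; have : e <= g2 u - g1 u by lra.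
  nra.
apply: (@lt_le_trans _ _
    (\int[mu]_(u in `[s', t]%classic) ((g1 u - g2 u) ^+ 2)%:E)%E).
  apply: (@lt_le_trans _ _ (\int[mu]_(u in `[s', t]%classic) (e ^+ 2)%:E)%E).
    have mu_st : (0 < mu `[s', t]%classic)%E.
      by rewrite lebesgue_measure_itv/= lte_fin s't -EFinD lte_fin subr_gt0.
    by rewrite integral_cst// mule_gt0 ?lte_fin ?exprn_gt0.
  apply: ge0_le_integral => [//|u _|//||u /sq_ge].
  - by rewrite lee_fin sqr_ge0.
  - exact: measurable_sq_dist.
  - by rewrite lee_fin.
apply: ge0_subset_integral => //.
- exact: measurable_sq_dist.
- by move=> u _; rewrite lee_fin sqr_ge0.
- move=> u /=; rewrite !in_itv/= andbT => /andP[su _].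
  by apply: le_trans su; rewrite le_max lexx.
Qed.

Lemma sq_dist_integral_eq0P g1 g2 : level_profile g1 -> level_profile g2 ->
  (\int[mu]_(u in `[0%R, +oo[%classic) ((g1 u - g2 u) ^+ 2)%:E = 0)%E <->
  (forall t, 0 <= t -> g1 t = g2 t).
Proof.
move=> p1 p2; split => [I0 t|eq_g].
  rewrite le_eqVlt => /predU1P[<-|t0]; first by rewrite !level_profile0.
  apply/eqP/negPn/negP => neq.
  by have := sq_dist_integral_gt0 p1 p2 t0 neq; rewrite I0 ltxx.
rewrite (eq_integral (fun _ => 0%E)) ?integral0// => u.
by rewrite inE/= in_itv/= andbT => u0; rewrite eq_g// subrr expr0n.
Qed.

End level_profile_theory.

Theorem theorem5 (R : realType) (X : Type) (f : X -> R -> R)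
  (f_ge0 : forall x y, 0 <= f x y)
  (f_cont : forall x, continuous (f x))
  (f_int : forall x, (\int[@lebesgue_measure R]_y (f x y)%:E = 1)%E) :
  (forall xa xb, prof_equiv f xa xb ->
     forall alpha : R, 0 < alpha < 1 -> tstar f xa alpha = tstar f xb alpha) /\
  (forall r : X -> X -> Prop,
     (forall x, r x x) ->
     (forall x y, r x y -> r y x) ->
     (forall x y z, r x y -> r y z -> r x z) ->
     (forall xa xb, r xa xb ->
        forall alpha : R, 0 < alpha < 1 -> tstar f xa alpha = tstar f xb alpha) ->
     forall xa xb, r xa xb -> prof_equiv f xa xb).
Proof.
have g_prof x : level_profile (gprof f x).
  apply: (level_profile_mass (mu := @lebesgue_measure R)) => //.
  exact: continuous_measurable_fun.
have tstar_eqP xa xb :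
    (forall alpha, 0 < alpha < 1 -> tstar f xa alpha = tstar f xb alpha) <->
    (forall t, 0 <= t -> gprof f xa t = gprof f xb t).
  exact: cutoff_eqP.
have equivP xa xb :
    prof_equiv f xa xb <-> (forall t, 0 <= t -> gprof f xa t = gprof f xb t).
  rewrite -(sq_dist_integral_eq0P (g_prof xa) (g_prof xb)); apply: sqrte_eq0.
  by apply: integral_ge0 => t _; rewrite lee_fin sqr_ge0.
split => [xa xb /equivP/tstar_eqP //|r _ _ _ r_tstar xa xb].
by move=> /r_tstar/tstar_eqP/equivP.
Qed.
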